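(* Let $K$ be a field, $\mathcal A$ a $K$-algebra, $\vartheta$ any one of the four types (left, right, pre-two-sided, two-sided), and $0\neq a\in\mathcal A$. Then the one-dimensional subspace $Ka$ is a $\vartheta$-Mathieu subspace of $\mathcal A$ if and only if one of the following holds: (1) $Ka$ is a $\vartheta$-ideal of $\mathcal A$, equivalently $Ka=(a)_\vartheta$; (2) $a$ is not a quasi-idempotent of $\mathcal A$.
   Context: All algebras are associative and unital. $a$ is a quasi-idempotent if $a^2=ra$ for some $r\in K^\times$. A $\vartheta$-ideal is a left ideal if $\vartheta$ = left, right ideal if $\vartheta$ = right, two-sided ideal if $\vartheta$ is pre-two-sided or two-sided. $(x)_\vartheta$ is $\mathcal Ax$ if $\vartheta$ = left, $x\mathcal A$ if right, the two-sided ideal generated by $x$ if two-sided, and $x\mathcal A+\mathcal Ax$ if pre-two-sided. A $K$-subspace $V$ is a left (resp. right) Mathieu subspace if whenever $b\in\mathcal A$ satisfies $b^m\in V$ for all $m\ge1$, then for every $c\in\mathcal A$, $cb^m\in V$ (resp. $b^mc\in V$) for all sufficiently large $m$; pre-two-sided if both left and right; two-sided if whenever $b^m\in V$ for all $m\ge1$, then for all $c,d\in\mathcal A$, $cb^md\in V$ for all sufficiently large $m$. *)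

From HB Require Import structures.
From mathcomp Require Import all_boot all_order all_algebra.
Set Implicit Arguments. Unset Strict Implicit. Unset Printing Implicit Defensive.
Import GRing.Theory.
Local Open Scope ring_scope.

Inductive mtype := MLeft | MRight | MPreTwo | MTwo.

Section Defs.
Variables (K : fieldType) (A : algType K).

Definition line (a : A) : A -> Prop := fun x => exists k : K, x = k *: a.

Definition quasi_idempotent (a : A) : Prop :=
  exists r : K, r != 0 /\ a * a = r *: a.

Definition additive_subgroup (V : A -> Prop) : Prop :=
  V 0 /\ (forall x y, V x -> V y -> V (x - y)).

Definition is_left_ideal (V : A -> Prop) : Prop :=
  additive_subgroup V /\ (forall c x, V x -> V (c * x)).
Definition is_right_ideal (V : A -> Prop) : Prop :=
  additive_subgroup V /\ (forall c x, V x -> V (x * c)).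
Definition is_twosided_ideal (V : A -> Prop) : Prop :=
  additive_subgroup V /\ (forall c x, V x -> V (c * x)) /\
  (forall c x, V x -> V (x * c)).

Definition is_ideal (t : mtype) (V : A -> Prop) : Prop :=
  match t with
  | MLeft => is_left_ideal V
  | MRight => is_right_ideal V
  | MPreTwo | MTwo => is_twosided_ideal V
  end.

Definition all_powers_in (V : A -> Prop) (b : A) : Prop :=
  forall m : nat, (1 <= m)%N -> V (b ^+ m).

Definition left_mathieu (V : A -> Prop) : Prop :=
  forall b, all_powers_in V b ->
  forall c, exists N : nat, forall m, (N <= m)%N -> V (c * b ^+ m).
Definition right_mathieu (V : A -> Prop) : Prop :=
  forall b, all_powers_in V b ->
  forall c, exists N : nat, forall m, (N <= m)%N -> V (b ^+ m * c).
Definition twosided_mathieu (V : A -> Prop) : Prop :=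
  forall b, all_powers_in V b ->
  forall c d, exists N : nat, forall m, (N <= m)%N -> V (c * b ^+ m * d).

Definition is_mathieu (t : mtype) (V : A -> Prop) : Prop :=
  match t with
  | MLeft => left_mathieu V
  | MRight => right_mathieu V
  | MPreTwo => left_mathieu V /\ right_mathieu V
  | MTwo => twosided_mathieu V
  end.
End Defs.

From Stdlib Require Import Classical.
From mathcomp Require Import all_boot all_order all_algebra.
Set Implicit Arguments. Unset Strict Implicit. Unset Printing Implicit Defensive.
Local Open Scope ring_scope.
Import GRing.Theory.

(* An ideal absorbs every product, so it is trivially a Mathieu subspace of
   the same type; and if a is not a quasi-idempotent then any b whose powers
   all lie in Ka satisfies b^2 = 0, so Mathieu conditions hold vacuously from
   m = 2 on.  Conversely, if a^2 = r a with r != 0, then e = r^-1 a is an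
   idempotent spanning Ka with e^m = e, so the Mathieu condition applied to
   b = e yields c e, e c in Ka for all c, i.e. Ka is an ideal. *)

Section MathieuSubspaces.
Variables (K : fieldType) (A : algType K).
Implicit Types (V : A -> Prop) (a b c d e : A).

Lemma ideal_mathieu (t : mtype) V : is_ideal t V -> is_mathieu t V.
Proof.
have absorbL W : (forall c x, W x -> W (c * x)) -> left_mathieu W.
  by move=> hL b hb c; exists 1%N => m m1; apply/hL/hb.
have absorbR W : (forall c x, W x -> W (x * c)) -> right_mathieu W.
  by move=> hR b hb c; exists 1%N => m m1; apply/hR/hb.
case: t => /= [[_ hL] | [_ hR] | [_ [hL hR]] | [_ [hL hR]]].
- exact: absorbL.
- exact: absorbR.
- by split; [apply: absorbL | apply: absorbR].
- by move=> b hb c d; exists 1%N => m m1; apply/hR/hL/hb.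
Qed.

Lemma nilpotent_powers_mathieu (t : mtype) V : V 0 ->
  (forall b, all_powers_in V b -> exists n, b ^+ n = 0) -> is_mathieu t V.
Proof.
move=> V0 hnil.
have vanish b : all_powers_in V b -> exists N, forall m, (N <= m)%N -> b ^+ m = 0.
  move=> /hnil[n bn0]; exists n => m nm.
  by rewrite -(subnK nm) exprD bn0 mulr0.
have hL : left_mathieu V.
  by move=> b /vanish[N hN] c; exists N => m /hN->; rewrite mulr0.
have hR : right_mathieu V.
  by move=> b /vanish[N hN] c; exists N => m /hN->; rewrite mul0r.
case: t => /=; [exact: hL | exact: hR | exact: (conj hL hR) |].
by move=> b /vanish[N hN] c d; exists N => m /hN->; rewrite mulr0 mul0r.
Qed.

Lemma expr_idem e m : e * e = e -> (0 < m)%N -> e ^+ m = e.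
Proof.
move=> ee; case: m => // m _; elim: m => [|m IHm]; first exact: expr1.
by rewrite exprS IHm ee.
Qed.

Lemma all_powers_in_idem V e : e * e = e -> V e -> all_powers_in V e.
Proof. by move=> ee Ve m m1; rewrite expr_idem. Qed.

Section Idempotent.
Variables (V : A -> Prop) (e : A).
Hypotheses (ee : e * e = e) (Ve : V e).

Lemma left_mathieu_idem : left_mathieu V -> forall c, V (c * e).
Proof.
move=> hL c; have [N hN] := hL e (all_powers_in_idem ee Ve) c.
by have := hN N.+1 (leqnSn N); rewrite expr_idem.
Qed.

Lemma right_mathieu_idem : right_mathieu V -> forall c, V (e * c).
Proof.
move=> hR c; have [N hN] := hR e (all_powers_in_idem ee Ve) c.
by have := hN N.+1 (leqnSn N); rewrite expr_idem.
Qed.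

Lemma twosided_mathieu_idem : twosided_mathieu V -> forall c d, V (c * e * d).
Proof.
move=> hT c d; have [N hN] := hT e (all_powers_in_idem ee Ve) c d.
by have := hN N.+1 (leqnSn N); rewrite expr_idem.
Qed.

End Idempotent.

Lemma line_additive_subgroup a : additive_subgroup (line a).
Proof.
split; first by exists 0; rewrite scale0r.
by move=> _ _ [k ->] [l ->]; exists (k - l); rewrite scalerBl.
Qed.

Lemma line_scale a x (k : K) : line a x -> line a (k *: x).
Proof. by move=> [l ->]; exists (k * l); rewrite scalerA. Qed.

Lemma quasi_idempotent_idem a : quasi_idempotent a ->
  exists2 e, e * e = e & line a e /\ line e a.
Proof.
move=> [r [r0 aa]]; exists (r^-1 *: a).
  by rewrite -scalerAl -scalerAr aa !scalerA -mulrA mulVf ?mulr1.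
by split; [exists r^-1 | exists r; rewrite scalerA mulfV ?scale1r].
Qed.

Lemma line_mull_closed a e : line e a -> (forall c, line a (c * e)) ->
  forall c x, line a x -> line a (c * x).
Proof.
move=> [k ->] hL c _ [l ->].
by rewrite -!scalerAr; apply/line_scale/line_scale/hL.
Qed.

Lemma line_mulr_closed a e : line e a -> (forall c, line a (e * c)) ->
  forall c x, line a x -> line a (x * c).
Proof.
move=> [k ->] hR c _ [l ->].
by rewrite -!scalerAl; apply/line_scale/line_scale/hR.
Qed.

Lemma mathieu_line_idem_ideal (t : mtype) a e :
  e * e = e -> line a e -> line e a ->
  is_mathieu t (line a) -> is_ideal t (line a).
Proof.
move=> ee ae ea; have sub := line_additive_subgroup a.
have idealL : (forall c, line a (c * e)) -> forall c x, line a x -> line a (c * x).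
  exact: line_mull_closed ea.
have idealR : (forall c, line a (e * c)) -> forall c x, line a x -> line a (x * c).
  exact: line_mulr_closed ea.
have idemL := left_mathieu_idem ee ae; have idemR := right_mathieu_idem ee ae.
case: t => /= [hL | hR | [hL hR] | hT].
- by split=> //; apply/idealL/idemL.
- by split=> //; apply/idealR/idemR.
- by split=> //; split; [apply/idealL/idemL | apply/idealR/idemR].
split=> //; split; [apply: idealL | apply: idealR] => c.
- by have := twosided_mathieu_idem ee ae hT c 1; rewrite mulr1.
- by have := twosided_mathieu_idem ee ae hT 1 c; rewrite mul1r.
Qed.

Lemma powers_in_line_sqr a b : ~ quasi_idempotent a ->
  all_powers_in (line a) b -> b ^+ 2 = 0.
Proof.
move=> nqa hb; have [k bk] := hb 1%N isT; have [l b2l] := hb 2%N isT.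
rewrite expr1 in bk; have [k0|k0] := eqVneq k 0; first by rewrite bk k0 scale0r expr0n.
have [l0|l0] := eqVneq l 0; first by rewrite b2l l0 scale0r.
case: nqa; exists (k ^- 2 * l); split; first by rewrite mulf_neq0 ?invr_eq0 ?expf_neq0.
move: b2l; rewrite bk exprZn => b2l.
by rewrite -scalerA -b2l scalerA mulVf ?expf_neq0 // scale1r.
Qed.

End MathieuSubspaces.

Theorem proposition4p8 (K : fieldType) (A : algType K) (t : mtype) (a : A) :
  a != 0 ->
  (is_mathieu t (line a) <-> (is_ideal t (line a) \/ ~ quasi_idempotent a)).
Proof.
move=> _; split=> [hM | [/ideal_mathieu // | nqa]].
- have [/quasi_idempotent_idem[e ee [ae ea]] | nqa] := classic (quasi_idempotent a).
    by left; apply: mathieu_line_idem_ideal ee ae ea hM.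
  by right.
- apply: nilpotent_powers_mathieu; first by case: (line_additive_subgroup a).
  by move=> b hb; exists 2%N; apply: powers_in_line_sqr nqa hb.
Qed.
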